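(* Let $d\in\mathbb{Z}_{\ge1}$, $\gamma\in\mathbb{Z}_{\ge2}$, and let integers $y(\ell),x^{\mathrm{bin}}(\ell),z(\ell)$ ($\ell\in\{0,\dots,d-1\}$) and $r(\ell)$ ($\ell\in\{0,\dots,d\}$) form a solution of the constraint system $\mathcal{S}(d,\gamma)$. Then for every $\ell\in\{0,\dots,d-1\}$: $$r(\ell)=\begin{cases} r(\ell+1), & \text{if } r(\ell+1)<\gamma^{2^\ell},\\ r(\ell+1)/\gamma^{2^\ell}, & \text{if } r(\ell+1)\ge\gamma^{2^\ell},\end{cases}$$ and $r(\ell)\le\gamma^{2^\ell}-1$ for every $\ell\in\{0,\dots,d\}$.
   Context: Constraint system $\mathcal{S}(d,\gamma)$: for given integers $d\ge1$, $\gamma\ge2$, integer variables $y(\ell),x^{\mathrm{bin}}(\ell),z(\ell)$ for $\ell\in\{0,\dots,d-1\}$ and $r(\ell)$ for $\ell\in\{0,\dots,d\}$, subject to, for every $\ell\in\{0,\dots,d-1\}$ (writing $g_\ell:=\gamma^{2^\ell}$): (C1) $y(\ell)\ge0$; (C2) $y(\ell)\le r(\ell+1)/g_\ell+1/(g_\ell+1)$; (C3) $y(\ell)\ge r(\ell+1)/g_\ell-(g_\ell-1)/g_\ell$; (C4) $x^{\mathrm{bin}}(\ell)\ge0$; (C5) $x^{\mathrm{bin}}(\ell)\le1$; (C6) $x^{\mathrm{bin}}(\ell)\le y(\ell)$; (C7) $y(\ell)\le(g_\ell+1)x^{\mathrm{bin}}(\ell)$; (C8) $r(\ell)\ge0$;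 (C9) $(g_\ell-1)z(\ell)+r(\ell)=r(\ell+1)$; (C10) $z(\ell)\ge0$; (C11) $z(\ell)\ge -g_\ell+g_\ell x^{\mathrm{bin}}(\ell)+r(\ell)$; (C12) $z(\ell)\le g_\ell x^{\mathrm{bin}}(\ell)$; (C13) $z(\ell)\le r(\ell)$; and additionally $r(0)=1$, $r(d)\ge2$, $r(d)\le\gamma^{2^d-1}$. *)

(* Integer variables are int; the constraints with fractions
   are interpreted in rat via the cast z%:~R. *)
From HB Require Import structures.
From mathcomp Require Import all_boot all_order all_algebra.
Set Implicit Arguments. Unset Strict Implicit. Unset Printing Implicit Defensive.
Import Order.TTheory GRing.Theory Num.Theory.
Local Open Scope ring_scope.

Definition gexp (gamma : int) (l : nat) : int := gamma ^+ (2 ^ l)%N.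

Definition Q (z : int) : rat := z%:~R.

(* The constraint system S(d, gamma); variables are functions nat -> int,
   only the indices in the stated ranges are constrained. *)
Definition system_S (d : nat) (gamma : int)
    (y xbin z r : nat -> int) : Prop :=
  (forall l : nat, (l < d)%N ->
     let g := gexp gamma l in
     0 <= y l
  /\ Q (y l) <= Q (r l.+1) / Q g + 1 / (Q g + 1)
  /\ Q (r l.+1) / Q g - (Q g - 1) / Q g <= Q (y l)
  /\ 0 <= xbin l
  /\ xbin l <= 1
  /\ xbin l <= y l
  /\ y l <= (g + 1) * xbin l
  /\ 0 <= r l
  /\ (g - 1) * z l + r l = r l.+1
  /\ 0 <= z l
  /\ - g + g * xbin l + r l <= z l
  /\ z l <= g * xbin l
  /\ z l <= r l)
  /\ r 0%N = 1
  /\ 2 <= r d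
  /\ r d <= gamma ^+ (2 ^ d - 1)%N.

From HB Require Import structures.
From mathcomp Require Import all_boot all_order all_algebra.
From mathcomp Require Import zify ring lra.
Import Order.TTheory GRing.Theory Num.Theory.

Set Implicit Arguments.
Unset Strict Implicit.
Unset Printing Implicit Defensive.

Local Open Scope ring_scope.

(* At each level the binary variable [xbin l] decides whether [r (l+1)] is
   divided by [g_l = gamma^(2^l)] or passed down unchanged: for [xbin l = 0]
   constraints (C6), (C7), (C12) force [y l = z l = 0], and then (C3) says
   [r (l+1) < g_l]; for [xbin l = 1] constraints (C11), (C13) force
   [z l = r l], so [r (l+1) = g_l * r l] by (C9), and (C2) with [y l >= 1]
   makes [r l] positive.  Since [g_(l+1) = g_l^2], the bound
   [r (l+1) < g_(l+1)] then propagates down from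
   [r d <= gamma^(2^d - 1) < g_d]. *)

Definition reduce_step (g rl rl1 : int) : Prop :=
  (rl = rl1 /\ rl1 < g) \/ (rl1 = g * rl /\ 0 < rl).

Lemma gexp_ge2 (gamma : int) : 2 <= gamma -> forall l, 2 <= gexp gamma l.
Proof.
move=> gamma_ge2 l; apply: le_trans (gamma_ge2) _.
by apply: ler_eXnr; [rewrite expn_gt0 | lia].
Qed.

Lemma gexpS (gamma : int) (l : nat) : gexp gamma l.+1 = gexp gamma l ^+ 2.
Proof. by rewrite /gexp -exprM expnS mulnC. Qed.

Lemma Q_divK (g a : int) : g != 0 -> Q (g * a) / Q g = Q a.
Proof. by move=> g_neq0; rewrite /Q intrM mulrC mulKf // intr_eq0. Qed.

Lemma lt_of_C3 (g a : int) : 0 < g ->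
  Q a / Q g - (Q g - 1) / Q g <= 0 -> a < g.
Proof.
move=> g_gt0; rewrite -mulrBl pmulr_lle0 ?invr_gt0 ?ltr0z // subr_le0.
by rewrite /Q -[1]/(1%:~R) -rmorphB ler_int; lia.
Qed.

Lemma gt0_of_C2 (g rl y : int) : 0 < g -> 1 <= y ->
  Q y <= Q rl + 1 / (Q g + 1) -> 0 < rl.
Proof.
move=> g_gt0 y_ge1 C2.
have g_gt0' : 0 < Q g by rewrite ltr0z.
have frac_lt1 : 1 / (Q g + 1) < 1 by rewrite mul1r invf_lt1; lra.
have : Q y < Q (rl + 1) by rewrite /Q rmorphD /=; lra.
by rewrite ltr_int; lia.
Qed.

Lemma reduce_step_of_constraints (g y x z rl rl1 : int) : 0 < g ->
  Q y <= Q rl1 / Q g + 1 / (Q g + 1) ->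
  Q rl1 / Q g - (Q g - 1) / Q g <= Q y ->
  0 <= x -> x <= 1 -> x <= y -> y <= (g + 1) * x ->
  (g - 1) * z + rl = rl1 -> 0 <= z ->
  - g + g * x + rl <= z -> z <= g * x -> z <= rl ->
  reduce_step g rl rl1.
Proof.
move=> g_gt0 C2 C3 x_ge0 x_le1 C6 C7 C9 C10 C11 C12 C13.
have [x_eq | x_eq] : x = 0 \/ x = 1 by lia.
all: rewrite {}x_eq in C6 C7 C11 C12.
- have [y_eq0 z_eq0] : y = 0 /\ z = 0 by lia.
  rewrite {}y_eq0 {}z_eq0 in C3 C9.
  left; split; first by rewrite -C9 mulr0 add0r.
  by apply: lt_of_C3 => //; move: C3; rewrite /Q rmorph0.
- have z_eq : z = rl by lia.
  have rl1_eq : rl1 = g * rl by rewrite -C9 z_eq; ring.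
  right; split => //.
  apply: (@gt0_of_C2 g rl y) => //.
  by rewrite rl1_eq Q_divK ?gt_eqF in C2.
Qed.

Lemma system_S_reduce_step (d : nat) (gamma : int) (y xbin z r : nat -> int)
    (l : nat) :
  2 <= gamma -> system_S d gamma y xbin z r -> (l < d)%N ->
  reduce_step (gexp gamma l) (r l) (r l.+1).
Proof.
move=> gamma_ge2 [S _] l_lt_d.
have [_ [C2 [C3 [C4 [C5 [C6 [C7 [_ [C9 [C10 [C11 [C12 C13]]]]]]]]]]]] :=
  S l l_lt_d.
have g_gt0 : 0 < gexp gamma l by have := gexp_ge2 gamma_ge2 l; lia.
exact: reduce_step_of_constraints g_gt0 C2 C3 C4 C5 C6 C7 C9 C10 C11 C12 C13.
Qed.

Lemma reduce_step_lt (g rl rl1 : int) : 0 < g ->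
  reduce_step g rl rl1 -> rl1 < g ^+ 2 -> rl < g.
Proof.
move=> g_gt0 [[-> //] | [-> _]].
by rewrite expr2 ltr_pM2l.
Qed.

Lemma downward_ind (P : nat -> Prop) (d : nat) :
  P d -> (forall l, (l < d)%N -> P l.+1 -> P l) ->
  forall l, (l <= d)%N -> P l.
Proof.
move=> Pd Pstep l l_le_d; rewrite -(subKn l_le_d).
elim: (d - l)%N (leq_subr l d) => [|k IHk] k_le_d; first by rewrite subn0.
apply: Pstep; first lia.
have -> : (d - k.+1).+1 = (d - k)%N by lia.
exact/IHk/ltnW.
Qed.

Lemma top_lt_gexp (gamma rd : int) (d : nat) : 2 <= gamma -> (0 < d)%N ->
  rd <= gamma ^+ (2 ^ d - 1)%N -> rd < gexp gamma d.
Proof.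
move=> gamma_ge2 d_gt0 rd_le; apply: le_lt_trans rd_le _.
by rewrite /gexp ltr_eXn2l ?subn1 ?ltn_predL ?expn_gt0 //; lia.
Qed.

Theorem mainTheorem6 (d : nat) (gamma : int) (y xbin z r : nat -> int) :
  (1 <= d)%N -> 2 <= gamma ->
  system_S d gamma y xbin z r ->
  (forall l : nat, (l < d)%N ->
     (r l.+1 < gexp gamma l -> r l = r l.+1) /\
     (gexp gamma l <= r l.+1 -> Q (r l) = Q (r l.+1) / Q (gexp gamma l)))
  /\ (forall l : nat, (l <= d)%N -> r l <= gexp gamma l - 1).
Proof.
move=> d_ge1 gamma_ge2 S.
have step l : (l < d)%N -> reduce_step (gexp gamma l) (r l) (r l.+1).
  exact: system_S_reduce_step gamma_ge2 S.
have g_gt0 l : 0 < gexp gamma l by have := gexp_ge2 gamma_ge2 l; lia.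
split=> [l l_lt_d | ].
  case: (step l l_lt_d) => [[-> lt_g] | [-> rl_gt0]]; split => // g_le.
  - by move: lt_g; rewrite ltNge g_le.
  - have : gexp gamma l * 1 <= gexp gamma l * r l by rewrite ler_pM2l.
    lia.
  - by rewrite Q_divK ?gt_eqF.
have [_ [_ [_ rd_le]]] := S.
suff r_lt_g l : (l <= d)%N -> r l < gexp gamma l by move=> l /r_lt_g; lia.
apply: (@downward_ind (fun k => r k < gexp gamma k)) => [|k k_lt_d r_lt_g1].
  exact: top_lt_gexp.
by apply: reduce_step_lt (g_gt0 k) (step k k_lt_d) _; rewrite -gexpS.
Qed.
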